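(* Let $\lambda_1>\lambda_2=\lambda_3>0$, $D=\mathrm{diag}(\lambda_1,\lambda_2,\lambda_2)$, and $G=\widetilde W_{1,0}(\cdot;D)\circ\mathbf P:S^3\to\mathbb R$. Then: (i) The global maxima of $G$ are the points $(0,0,\pm1,0)$, $(0,0,0,\pm1)$ and $(0,0,\cos\alpha,\sin\alpha)$, $\alpha\in[0,2\pi)$; correspondingly the rotations $\mathrm{diag}(-1,1,-1)$, $\mathrm{diag}(-1,-1,1)$ and $$\begin{pmatrix}-1&0&0\\0&\cos2\alpha&\sin2\alpha\\0&\sin2\alpha&-\cos2\alpha\end{pmatrix},\ \alpha\in[0,2\pi),$$ are the global maxima of $\widetilde W_{1,0}(\cdot;D)$ on $SO(3)$. (ii) If $s=\lambda_1+\lambda_2>2$, then, with $a=\sqrt{\frac12+\frac1s}$, $b=\sqrt{\frac12-\frac1s}$, the global minima of $G$ are the points $(\pm a,0,0,\pm b)$, $(\pm a,0,\pm b,0)$ (all sign combinations) and $(\pm a,0,b\cos\alpha,b\sin\alpha)$, $\alpha\in[0,2\pi)$; the corresponding rotations $\mathbf P(q)$ are the global minima of $\widetilde W_{1,0}(\cdot;D)$ on $SO(3)$, with minimal value $(\lambda_2-1)^2+\frac12(\lambda_1-\lambda_2)^2$. (iii) If $\lambda_1+\lambda_2\le2$, then $(\pm1,0,0,0)$ are the only global minima of $G$, and $\mathbb I_3$ is the global minimum of $\widetilde W_{1,0}(\cdot;D)$.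
   Context: $\mathrm{sym}(Y)=\tfrac12(Y+Y^T)$, $\|Y\|^2=\mathrm{tr}(Y^TY)$. $\widetilde W_{1,0}(R;D)=\|\mathrm{sym}(R^TD-\mathbb I_3)\|^2$ for $R\in SO(3)$. $S^3\subset\mathbb R^4$ is the unit sphere and $\mathbf P:S^3\to SO(3)$ is $$\mathbf P(q)=\begin{pmatrix}(q^0)^2+(q^1)^2-(q^2)^2-(q^3)^2 & 2(q^1q^2-q^0q^3) & 2(q^1q^3+q^0q^2)\\ 2(q^1q^2+q^0q^3) & (q^0)^2-(q^1)^2+(q^2)^2-(q^3)^2 & 2(q^2q^3-q^0q^1)\\ 2(q^1q^3-q^0q^2) & 2(q^2q^3+q^0q^1) & (q^0)^2-(q^1)^2-(q^2)^2+(q^3)^2\end{pmatrix},$$ for $q=(q^0,q^1,q^2,q^3)\in S^3$. *)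

From Stdlib Require Import Reals Lra.
Open Scope R_scope.

(* 3x3 real matrices, indexed by 0,1,2 (entries outside are irrelevant). *)
Definition Mat3 := nat -> nat -> R.
Definition sum3 (f : nat -> R) : R := f 0%nat + f 1%nat + f 2%nat.
Definition mat_eq (A B : Mat3) : Prop :=
  forall i j, (i < 3)%nat -> (j < 3)%nat -> A i j = B i j.
Definition mmul (A B : Mat3) : Mat3 := fun i j => sum3 (fun k => A i k * B k j).
Definition mtr (A : Mat3) : Mat3 := fun i j => A j i.
Definition madd (A B : Mat3) : Mat3 := fun i j => A i j + B i j.
Definition msub (A B : Mat3) : Mat3 := fun i j => A i j - B i j.
Definition mscale (c : R) (A : Mat3) : Mat3 := fun i j => c * A i j.
Definition Id3 : Mat3 := fun i j => if Nat.eqb i j then 1 else 0.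
Definition diag3 (a b c : R) : Mat3 := fun i j =>
  match i, j with
  | 0%nat, 0%nat => a | 1%nat, 1%nat => b | 2%nat, 2%nat => c | _, _ => 0 end.
Definition trace3 (A : Mat3) : R := sum3 (fun i => A i i).
Definition det3 (A : Mat3) : R :=
  A 0%nat 0%nat * (A 1%nat 1%nat * A 2%nat 2%nat - A 1%nat 2%nat * A 2%nat 1%nat)
  - A 0%nat 1%nat * (A 1%nat 0%nat * A 2%nat 2%nat - A 1%nat 2%nat * A 2%nat 0%nat)
  + A 0%nat 2%nat * (A 1%nat 0%nat * A 2%nat 1%nat - A 1%nat 1%nat * A 2%nat 0%nat).

Definition msym (Y : Mat3) : Mat3 := mscale (1/2) (madd Y (mtr Y)).
Definition normsq (Y : Mat3) : R := trace3 (mmul (mtr Y) Y).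

Definition inSO3 (Q : Mat3) : Prop := mat_eq (mmul (mtr Q) Q) Id3 /\ det3 Q = 1.

Definition W10 (Q D : Mat3) : R := normsq (msym (msub (mmul (mtr Q) D) Id3)).

Record quat := mkQ { q0 : R; q1 : R; q2 : R; q3 : R }.
Definition onS3 (q : quat) : Prop := q0 q ^ 2 + q1 q ^ 2 + q2 q ^ 2 + q3 q ^ 2 = 1.

Definition Pmat (q : quat) : Mat3 := fun i j =>
  let a := q0 q in let b := q1 q in let c := q2 q in let d := q3 q in
  match i, j with
  | 0%nat, 0%nat => a^2 + b^2 - c^2 - d^2
  | 0%nat, 1%nat => 2 * (b * c - a * d)
  | 0%nat, 2%nat => 2 * (b * d + a * c)
  | 1%nat, 0%nat => 2 * (b * c + a * d)
  | 1%nat, 1%nat => a^2 - b^2 + c^2 - d^2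
  | 1%nat, 2%nat => 2 * (c * d - a * b)
  | 2%nat, 0%nat => 2 * (b * d - a * c)
  | 2%nat, 1%nat => 2 * (c * d + a * b)
  | 2%nat, 2%nat => a^2 - b^2 - c^2 + d^2
  | _, _ => 0 end.

Definition Gfun (D : Mat3) (q : quat) : R := W10 (Pmat q) D.

Definition isGlobMaxG (D : Mat3) (q : quat) : Prop :=
  onS3 q /\ forall p, onS3 p -> Gfun D p <= Gfun D q.
Definition isGlobMinG (D : Mat3) (q : quat) : Prop :=
  onS3 q /\ forall p, onS3 p -> Gfun D q <= Gfun D p.
Definition isGlobMaxW (D : Mat3) (Q : Mat3) : Prop :=
  inSO3 Q /\ forall S, inSO3 S -> W10 S D <= W10 Q D.
Definition isGlobMinW (D : Mat3) (Q : Mat3) : Prop :=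
  inSO3 Q /\ forall S, inSO3 S -> W10 Q D <= W10 S D.

Definition RmaxAlpha (al : R) : Mat3 := fun i j =>
  match i, j with
  | 0%nat, 0%nat => -1
  | 1%nat, 1%nat => cos (2 * al) | 1%nat, 2%nat => sin (2 * al)
  | 2%nat, 1%nat => sin (2 * al) | 2%nat, 2%nat => - cos (2 * al)
  | _, _ => 0 end.

Definition isSign (e : R) : Prop := e = 1 \/ e = -1.

(* Proof strategy.
   1. P : S^3 -> SO(3) is onto.  For a rotation Q, the cofactor identity Q = cof Q gives
      orthonormal rows, and then Shepperd's identities express the products of the
      quaternion coordinates through the entries of Q; when 1 + tr Q > 0 this yields an
      explicit preimage, and the other cases reduce to it by flipping two columns of Q,
      which corresponds to right multiplication by i, j or k.  Hence extrema of
      W~_{1,0}(.;D) on SO(3) are exactly the images of extrema of G on S^3.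
   2. G depends only on u = q0^2, v = q1^2 and w = q2^2 + q3^2; on the sphere w = 1 - u - v
      and G becomes a quadratic polynomial on the triangle u, v >= 0, u + v <= 1.
   3. On the triangle, Gmax - G, G - Gmin (when l1 + l2 > 2) and G - Gid (when l1 + l2 <= 2)
      are sums of manifestly nonnegative terms, whose vanishing locus is read off directly:
      u = v = 0 for the maximum, v = 0 and u = 1/2 + 1/(l1+l2) for the minimum in case (ii),
      and u = 1 in case (iii).
   4. These loci are circles (or pairs of points) on S^3, described in polar coordinates
      in the (q2,q3)-plane, and their images under P are computed explicitly. *)

From Stdlib Require Import Reals Lra Lia Psatz.
Open Scope R_scope.

Lemma mat_eq_sym (A B : Mat3) : mat_eq A B -> mat_eq B A.
Proof. intros H i j hi hj; symmetry; auto. Qed.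

Lemma mat_eq_trans (A B C : Mat3) : mat_eq A B -> mat_eq B C -> mat_eq A C.
Proof. intros H1 H2 i j hi hj; rewrite H1 by auto; auto. Qed.

Ltac rewrite_entries H :=
  rewrite ?(H 0%nat 0%nat), ?(H 0%nat 1%nat), ?(H 0%nat 2%nat),
          ?(H 1%nat 0%nat), ?(H 1%nat 1%nat), ?(H 1%nat 2%nat),
          ?(H 2%nat 0%nat), ?(H 2%nat 1%nat), ?(H 2%nat 2%nat) by lia.

Ltac entrywise :=
  intros i j hi hj;
  destruct i as [|[|[|i]]]; try lia; destruct j as [|[|[|j]]]; try lia.

Lemma W10_mat_eq (A B D : Mat3) : mat_eq A B -> W10 A D = W10 B D.
Proof.
  intro H. cbv beta iota zeta delta [W10 normsq msym msub mmul mtr mscale madd trace3 sum3].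
  rewrite_entries H. reflexivity.
Qed.

Lemma inSO3_mat_eq (A B : Mat3) : mat_eq A B -> inSO3 A -> inSO3 B.
Proof.
  intros H [Hm Hd]. split.
  - entrywise; rewrite <- (Hm _ _ hi hj);
      cbv beta iota zeta delta [mmul mtr sum3]; rewrite_entries H; reflexivity.
  - rewrite <- Hd. unfold det3. rewrite_entries H. reflexivity.
Qed.

Lemma Pmat_SO3 (q : quat) : onS3 q -> inSO3 (Pmat q).
Proof.
  destruct q as [a b c d]; unfold onS3; cbn [q0 q1 q2 q3]; intro hn.
  (* P(q)^T P(q) = |q|^4 I and det P(q) = |q|^6 *)
  assert (hn2 : (a^2+b^2+c^2+d^2)^2 = 1) by (rewrite hn; ring).
  assert (hn3 : (a^2+b^2+c^2+d^2)^3 = 1) by (rewrite hn; ring).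
  split.
  - entrywise; cbv beta iota zeta delta [Pmat mmul mtr sum3 Id3 Nat.eqb q0 q1 q2 q3]; lra.
  - cbv beta iota zeta delta [Pmat det3 q0 q1 q2 q3]; lra.
Qed.

(* The cofactor matrix: cof Q j k is the (j,k) cofactor of Q, so that adj Q = (cof Q)^T. *)
Definition cof (Q : Mat3) (j k : nat) : R :=
  match j, k with
  | 0%nat, 0%nat => Q 1%nat 1%nat * Q 2%nat 2%nat - Q 1%nat 2%nat * Q 2%nat 1%nat
  | 0%nat, 1%nat => Q 1%nat 2%nat * Q 2%nat 0%nat - Q 1%nat 0%nat * Q 2%nat 2%nat
  | 0%nat, 2%nat => Q 1%nat 0%nat * Q 2%nat 1%nat - Q 1%nat 1%nat * Q 2%nat 0%nat
  | 1%nat, 0%nat => Q 0%nat 2%nat * Q 2%nat 1%nat - Q 0%nat 1%nat * Q 2%nat 2%nat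
  | 1%nat, 1%nat => Q 0%nat 0%nat * Q 2%nat 2%nat - Q 0%nat 2%nat * Q 2%nat 0%nat
  | 1%nat, 2%nat => Q 0%nat 1%nat * Q 2%nat 0%nat - Q 0%nat 0%nat * Q 2%nat 1%nat
  | 2%nat, 0%nat => Q 0%nat 1%nat * Q 1%nat 2%nat - Q 0%nat 2%nat * Q 1%nat 1%nat
  | 2%nat, 1%nat => Q 0%nat 2%nat * Q 1%nat 0%nat - Q 0%nat 0%nat * Q 1%nat 2%nat
  | 2%nat, 2%nat => Q 0%nat 0%nat * Q 1%nat 1%nat - Q 0%nat 1%nat * Q 1%nat 0%nat
  | _, _ => 0 end.

Lemma cofactor_defect (Q : Mat3) (i j : nat) : (i < 3)%nat -> (j < 3)%nat ->
  cof Q j i - Q j i = sum3 (fun k => (Id3 i k - mmul (mtr Q) Q i k) * cof Q j k)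
                      + Q j i * (det3 Q - 1).
Proof.
  intros hi hj.
  destruct i as [|[|[|i]]]; try lia; destruct j as [|[|[|j]]]; try lia;
  cbv beta iota zeta delta [cof sum3 Id3 mmul mtr det3 Nat.eqb]; ring.
Qed.

Lemma SO3_eq_cof (Q : Mat3) : inSO3 Q -> mat_eq Q (cof Q).
Proof.
  intros [Hm Hd] j i hj hi.
  pose proof (cofactor_defect Q i j hi hj) as K. unfold sum3 in K.
  rewrite (Hm i 0%nat), (Hm i 1%nat), (Hm i 2%nat), Hd in K by lia.
  lra.
Qed.

Lemma laplace_expansion (Q : Mat3) (i j : nat) : (i < 3)%nat -> (j < 3)%nat ->
  sum3 (fun k => Q i k * cof Q j k) = Id3 i j * det3 Q.
Proof.
  intros hi hj.
  destruct i as [|[|[|i]]]; try lia; destruct j as [|[|[|j]]]; try lia;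
  cbv beta iota zeta delta [cof sum3 Id3 det3 Nat.eqb]; ring.
Qed.

(* Hence the rows of a rotation are orthonormal as well: Q Q^T = Q adj(Q) = I. *)
Lemma SO3_rows (Q : Mat3) : inSO3 Q -> mat_eq (mmul Q (mtr Q)) Id3.
Proof.
  intros HQ i j hi hj.
  pose proof (laplace_expansion Q i j hi hj) as L.
  rewrite (proj2 HQ), Rmult_1_r in L. rewrite <- L.
  unfold mmul, mtr, sum3.
  rewrite (SO3_eq_cof Q HQ j 0%nat), (SO3_eq_cof Q HQ j 1%nat), (SO3_eq_cof Q HQ j 2%nat) by lia.
  reflexivity.
Qed.

Ltac specialize_entries H :=
  pose proof (H 0%nat 0%nat ltac:(lia) ltac:(lia)); pose proof (H 0%nat 1%nat ltac:(lia) ltac:(lia));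
  pose proof (H 0%nat 2%nat ltac:(lia) ltac:(lia)); pose proof (H 1%nat 0%nat ltac:(lia) ltac:(lia));
  pose proof (H 1%nat 1%nat ltac:(lia) ltac:(lia)); pose proof (H 1%nat 2%nat ltac:(lia) ltac:(lia));
  pose proof (H 2%nat 0%nat ltac:(lia) ltac:(lia)); pose proof (H 2%nat 1%nat ltac:(lia) ltac:(lia));
  pose proof (H 2%nat 2%nat ltac:(lia) ltac:(lia)).

(* Shepperd's identities: with t = 1 + tr Q and K = (Q21 - Q12, Q02 - Q20, Q10 - Q01),
   the products K_i K_j equal t times the entries of 4 q q^T predicted by [Pmat].
   Using orthogonality of rows and columns and Q = cof Q they are linear identities. *)
Lemma shepperd_identities (Q : Mat3) : inSO3 Q ->
  let t := 1 + Q 0%nat 0%nat + Q 1%nat 1%nat + Q 2%nat 2%nat in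
  let K1 := Q 2%nat 1%nat - Q 1%nat 2%nat in
  let K2 := Q 0%nat 2%nat - Q 2%nat 0%nat in
  let K3 := Q 1%nat 0%nat - Q 0%nat 1%nat in
  K1 * K1 = t * (1 + Q 0%nat 0%nat - Q 1%nat 1%nat - Q 2%nat 2%nat) /\
  K2 * K2 = t * (1 - Q 0%nat 0%nat + Q 1%nat 1%nat - Q 2%nat 2%nat) /\
  K3 * K3 = t * (1 - Q 0%nat 0%nat - Q 1%nat 1%nat + Q 2%nat 2%nat) /\
  K1 * K2 = t * (Q 0%nat 1%nat + Q 1%nat 0%nat) /\
  K1 * K3 = t * (Q 0%nat 2%nat + Q 2%nat 0%nat) /\
  K2 * K3 = t * (Q 1%nat 2%nat + Q 2%nat 1%nat).
Proof.
  intros HQ t K1 K2 K3.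
  specialize_entries (proj1 HQ). specialize_entries (SO3_rows Q HQ).
  specialize_entries (SO3_eq_cof Q HQ).
  cbv beta iota zeta delta [mmul mtr sum3 Id3 Nat.eqb cof] in *.
  unfold t, K1, K2, K3. repeat split; lra.
Qed.

(* Dividing Shepperd's identities by 16 a^2 = 4 t gives the quaternion products. *)
Lemma scaled_product (t a Ki Kj Kij : R) :
  a * a = t / 4 -> a <> 0 -> Ki * Kj = t * Kij -> (Ki / (4 * a)) * (Kj / (4 * a)) = Kij / 4.
Proof.
  intros ha ha0 hK.
  replace (Ki / (4 * a) * (Kj / (4 * a))) with (Ki * Kj / (16 * (a * a))) by (field; lra).
  rewrite hK, ha. field. intro ht. apply ha0. nra.
Qed.

(* A rotation with 1 + tr Q > 0 is P(q) for q = (a, K1/4a, K2/4a, K3/4a), a = sqrt(1 + tr Q)/2. *)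
Lemma quaternion_of_rotation_pos (Q : Mat3) :
  inSO3 Q -> 0 < 1 + Q 0%nat 0%nat + Q 1%nat 1%nat + Q 2%nat 2%nat ->
  exists q, onS3 q /\ mat_eq Q (Pmat q).
Proof.
  intros HQ ht.
  destruct (shepperd_identities Q HQ) as (i1 & i2 & i3 & i4 & i5 & i6).
  set (t := 1 + Q 0%nat 0%nat + Q 1%nat 1%nat + Q 2%nat 2%nat) in *.
  set (a := sqrt t / 2).
  assert (ha : a * a = t / 4).
  { unfold a. replace (sqrt t / 2 * (sqrt t / 2)) with (sqrt t * sqrt t / 4) by field.
    rewrite sqrt_sqrt; lra. }
  assert (ha0 : a <> 0) by (unfold a; pose proof (sqrt_lt_R0 t ht); lra).
  pose proof (scaled_product _ _ _ _ _ ha ha0 i1) as pbb.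
  pose proof (scaled_product _ _ _ _ _ ha ha0 i2) as pcc.
  pose proof (scaled_product _ _ _ _ _ ha ha0 i3) as pdd.
  pose proof (scaled_product _ _ _ _ _ ha ha0 i4) as pbc.
  pose proof (scaled_product _ _ _ _ _ ha ha0 i5) as pbd.
  pose proof (scaled_product _ _ _ _ _ ha ha0 i6) as pcd.
  set (K1 := Q 2%nat 1%nat - Q 1%nat 2%nat) in *.
  set (K2 := Q 0%nat 2%nat - Q 2%nat 0%nat) in *.
  set (K3 := Q 1%nat 0%nat - Q 0%nat 1%nat) in *.
  assert (pab : a * (K1 / (4 * a)) = K1 / 4) by (field; lra).
  assert (pac : a * (K2 / (4 * a)) = K2 / 4) by (field; lra).
  assert (pad : a * (K3 / (4 * a)) = K3 / 4) by (field; lra).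
  set (b := K1 / (4 * a)) in *. set (c := K2 / (4 * a)) in *. set (d := K3 / (4 * a)) in *.
  exists (mkQ a b c d). clearbody a b c d.
  split.
  - unfold onS3; cbn [q0 q1 q2 q3]; unfold t in *; lra.
  - entrywise; cbv beta iota zeta delta [Pmat q0 q1 q2 q3]; unfold t, K1, K2, K3 in *; lra.
Qed.

Definition flip (Q : Mat3) (e0 e1 e2 : R) : Mat3 := fun i j =>
  Q i j * (match j with 0%nat => e0 | 1%nat => e1 | _ => e2 end).

Lemma SO3_flip (Q : Mat3) (e0 e1 e2 : R) :
  isSign e0 -> isSign e1 -> isSign e2 -> e0 * e1 * e2 = 1 ->
  inSO3 Q -> inSO3 (flip Q e0 e1 e2).
Proof.
  intros s0 s1 s2 he [Hm Hd].
  destruct s0 as [->| ->], s1 as [->| ->], s2 as [->| ->]; try lra; split;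
  try (entrywise; specialize (Hm _ _ hi hj);
       cbv beta iota zeta delta [flip mmul mtr sum3 Id3 Nat.eqb] in *; lra);
  cbv beta iota zeta delta [flip det3] in *; lra.
Qed.

Lemma flip_unflip (Q B : Mat3) (e0 e1 e2 : R) :
  isSign e0 -> isSign e1 -> isSign e2 ->
  mat_eq (flip Q e0 e1 e2) B -> mat_eq Q (flip B e0 e1 e2).
Proof.
  intros s0 s1 s2 H i j hi hj. unfold flip at 1. rewrite <- (H _ _ hi hj). unfold flip.
  destruct s0 as [->| ->], s1 as [->| ->], s2 as [->| ->];
    destruct j as [|[|j]]; ring.
Qed.

(* Flipping two columns of P(q) is P of q times i, j or k, up to sign. *)
Lemma Pmat_flip (a b c d : R) :
  mat_eq (flip (Pmat (mkQ a b c d)) 1 (-1) (-1)) (Pmat (mkQ (-b) a d (-c))) /\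
  mat_eq (flip (Pmat (mkQ a b c d)) (-1) 1 (-1)) (Pmat (mkQ (-c) (-d) a b)) /\
  mat_eq (flip (Pmat (mkQ a b c d)) (-1) (-1) 1) (Pmat (mkQ (-d) c (-b) a)).
Proof.
  split; [|split]; entrywise; cbv beta iota zeta delta [flip Pmat q0 q1 q2 q3]; ring.
Qed.

Lemma sign_one : isSign 1. Proof. left; reflexivity. Qed.
Lemma sign_minus_one : isSign (-1). Proof. right; reflexivity. Qed.

Lemma quaternion_of_flipped (Q : Mat3) (e0 e1 e2 : R) (f : quat -> quat) :
  isSign e0 -> isSign e1 -> isSign e2 -> e0 * e1 * e2 = 1 -> inSO3 Q ->
  0 < 1 + e0 * Q 0%nat 0%nat + e1 * Q 1%nat 1%nat + e2 * Q 2%nat 2%nat ->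
  (forall q, onS3 q -> onS3 (f q) /\ mat_eq (flip (Pmat q) e0 e1 e2) (Pmat (f q))) ->
  exists q, onS3 q /\ mat_eq Q (Pmat q).
Proof.
  intros s0 s1 s2 he HQ ht hf.
  destruct (quaternion_of_rotation_pos (flip Q e0 e1 e2)) as [q [hq h]].
  - apply SO3_flip; assumption.
  - unfold flip. lra.
  - exists (f q). split; [apply hf, hq|].
    exact (mat_eq_trans _ _ _ (flip_unflip _ _ _ _ _ s0 s1 s2 h) (proj2 (hf q hq))).
Qed.

Lemma Pmat_surjective (Q : Mat3) : inSO3 Q -> exists q, onS3 q /\ mat_eq Q (Pmat q).
Proof.
  intros HQ. pose proof sign_one. pose proof sign_minus_one.
  (* the four numbers 1 + e0 Q00 + e1 Q11 + e2 Q22 (e0 e1 e2 = 1) sum to 4 *)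
  destruct (Rlt_dec 0 (1 + Q 0%nat 0%nat + Q 1%nat 1%nat + Q 2%nat 2%nat)) as [h0|h0].
  { exact (quaternion_of_rotation_pos Q HQ h0). }
  destruct (Rlt_dec 0 (1 + Q 0%nat 0%nat - Q 1%nat 1%nat - Q 2%nat 2%nat)) as [h1|h1].
  { apply (quaternion_of_flipped Q 1 (-1) (-1) (fun q => mkQ (- q1 q) (q0 q) (q3 q) (- q2 q)));
      auto; [lra | lra |].
    intros [a b c d] hq. split; [unfold onS3 in *; cbn in *; lra | apply Pmat_flip]. }
  destruct (Rlt_dec 0 (1 - Q 0%nat 0%nat + Q 1%nat 1%nat - Q 2%nat 2%nat)) as [h2|h2].
  { apply (quaternion_of_flipped Q (-1) 1 (-1) (fun q => mkQ (- q2 q) (- q3 q) (q0 q) (q1 q)));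
      auto; [lra | lra |].
    intros [a b c d] hq. split; [unfold onS3 in *; cbn in *; lra | apply Pmat_flip]. }
  apply (quaternion_of_flipped Q (-1) (-1) 1 (fun q => mkQ (- q3 q) (q2 q) (- q1 q) (q0 q)));
    auto; [lra | lra |].
  intros [a b c d] hq. split; [unfold onS3 in *; cbn in *; lra | apply Pmat_flip].
Qed.

Lemma extremum_transfer (D : Mat3) (better : R -> R -> Prop) (Q : Mat3) :
  (inSO3 Q /\ forall S, inSO3 S -> better (W10 S D) (W10 Q D)) <->
  exists q, (onS3 q /\ forall p, onS3 p -> better (Gfun D p) (Gfun D q)) /\ mat_eq Q (Pmat q).
Proof.
  split.
  - intros [hQ H]. destruct (Pmat_surjective Q hQ) as [q [hq hE]].
    exists q. split; [split; [exact hq|] | exact hE].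
    intros p hp. unfold Gfun. rewrite <- (W10_mat_eq _ _ D hE). apply H, Pmat_SO3, hp.
  - intros [q [[hq H] hE]]. split; [exact (inSO3_mat_eq _ _ (mat_eq_sym _ _ hE) (Pmat_SO3 q hq))|].
    intros S hS. destruct (Pmat_surjective S hS) as [p [hp hpE]].
    rewrite (W10_mat_eq _ _ D hpE), (W10_mat_eq _ _ D hE). apply H, hp.
Qed.

Lemma isGlobMaxW_iff (D Q : Mat3) :
  isGlobMaxW D Q <-> exists q, isGlobMaxG D q /\ mat_eq Q (Pmat q).
Proof. exact (extremum_transfer D Rle Q). Qed.

Lemma isGlobMinW_iff (D Q : Mat3) :
  isGlobMinW D Q <-> exists q, isGlobMinG D q /\ mat_eq Q (Pmat q).
Proof. exact (extremum_transfer D (fun x y => y <= x) Q). Qed.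

Lemma isGlobMaxG_iff_value (D : Mat3) (M : R) :
  (forall p, onS3 p -> Gfun D p <= M) -> (exists p, onS3 p /\ Gfun D p = M) ->
  forall q, isGlobMaxG D q <-> onS3 q /\ Gfun D q = M.
Proof.
  intros hle [p [hp hpM]] q. split.
  - intros [hq H]. split; [exact hq|]. specialize (H p hp). specialize (hle q hq). lra.
  - intros [hq hqM]. split; [exact hq|]. intros r hr. rewrite hqM. apply hle, hr.
Qed.

Lemma isGlobMinG_iff_value (D : Mat3) (m : R) :
  (forall p, onS3 p -> m <= Gfun D p) -> (exists p, onS3 p /\ Gfun D p = m) ->
  forall q, isGlobMinG D q <-> onS3 q /\ Gfun D q = m.
Proof.
  intros hge [p [hp hpm]] q. split.
  - intros [hq H]. split; [exact hq|]. specialize (H p hp). specialize (hge q hq). lra.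
  - intros [hq hqm]. split; [exact hq|]. intros r hr. rewrite hqm. apply hge, hr.
Qed.

(* The reduced objective: G written through u = q0^2, v = q1^2, w = q2^2 + q3^2, as a
   polynomial homogeneous of degree 2 in |q|^2 so that it agrees with G on all of R^4.
   Here tr(P(q)^T D) = l1 (u + v - w) + 2 l2 (u - v). *)
Definition Gred (l1 l2 u v w : R) : R :=
   (l1^2 + 2*l2^2)/2 * (u+v+w)^2
   + (l1^2*(u+v-w)^2 + l2^2*(2*(u-v)^2 + 2*w^2 - 8*u*v) + 8*l1*l2*w*(v-u))/2
   - 2*(l1*(u+v-w) + 2*l2*(u-v)) + 3.

Lemma G_reduced (l1 l2 : R) (q : quat) :
  Gfun (diag3 l1 l2 l2) q = Gred l1 l2 (q0 q ^ 2) (q1 q ^ 2) (q2 q ^ 2 + q3 q ^ 2).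
Proof.
  destruct q as [a b c d]. unfold Gred.
  cbv beta iota zeta delta [Gfun W10 normsq msym msub mmul mtr mscale madd trace3 sum3
                            Id3 diag3 Pmat q0 q1 q2 q3 Nat.eqb].
  field_simplify_eq. ring.
Qed.

Lemma G_on_sphere (l1 l2 : R) (q : quat) : onS3 q ->
  Gfun (diag3 l1 l2 l2) q = Gred l1 l2 (q0 q ^ 2) (q1 q ^ 2) (1 - q0 q ^ 2 - q1 q ^ 2).
Proof.
  intro hq. rewrite G_reduced. unfold onS3 in hq. f_equal. lra.
Qed.

Definition triangle (u v : R) : Prop := 0 <= u /\ 0 <= v /\ u + v <= 1.

Lemma onS3_triangle (q : quat) : onS3 q -> triangle (q0 q ^ 2) (q1 q ^ 2).
Proof.
  unfold onS3, triangle. intro h.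
  pose proof (pow2_ge_0 (q0 q)). pose proof (pow2_ge_0 (q1 q)).
  pose proof (pow2_ge_0 (q2 q)). pose proof (pow2_ge_0 (q3 q)). lra.
Qed.

(* The maximal value, attained at u = v = 0, e.g. at P(q) = diag(-1,1,-1). *)
Definition Gmax (l1 l2 : R) : R := l1^2 + 2*l2^2 + 2*l1 + 3.

Lemma Gred_max_gap (l1 l2 u v : R) : triangle u v ->
  4*(l1+l2)*u + 4*(l1-l2)*v <= Gmax l1 l2 - Gred l1 l2 u v (1-u-v).
Proof.
  intros [hu [hv huv]].
  replace (Gmax l1 l2 - Gred l1 l2 u v (1-u-v)) with
    (4*(l1+l2)*u + 4*(l1-l2)*v + 2*(l1+l2)^2*u*(1-u-v) + 2*(l1-l2)^2*v*(1-u-v)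
     + 8*l2^2*u*v)
    by (unfold Gmax, Gred; field).
  assert (0 <= (l1+l2)^2*u*(1-u-v)) by (apply Rmult_le_pos; [apply Rmult_le_pos; [apply pow2_ge_0|]|]; lra).
  assert (0 <= (l1-l2)^2*v*(1-u-v)) by (apply Rmult_le_pos; [apply Rmult_le_pos; [apply pow2_ge_0|]|]; lra).
  assert (0 <= l2^2*u*v) by (apply Rmult_le_pos; [apply Rmult_le_pos; [apply pow2_ge_0|]|]; lra).
  lra.
Qed.

Lemma Gred_max_value (l1 l2 : R) : Gred l1 l2 0 0 (1-0-0) = Gmax l1 l2.
Proof. unfold Gred, Gmax. field. Qed.

(* The combination z = u + (l1-l2)/(l1+l2) v on which the minimization hinges, its optimal
   value z* = 1/2 + 1/(l1+l2), the minimal value in case (ii) and the value at the identity. *)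
Definition zweight (l1 l2 u v : R) : R := u + (l1 - l2) * v / (l1 + l2).
Definition zstar (l1 l2 : R) : R := 1/2 + 1/(l1 + l2).
Definition Gmin (l1 l2 : R) : R := (l2 - 1) ^ 2 + 1/2 * (l1 - l2) ^ 2.
Definition Gid (l1 l2 : R) : R := (l1 - 1) ^ 2 + 2 * (l2 - 1) ^ 2.

Lemma Gred_min_form (l1 l2 u v : R) : l1 + l2 <> 0 ->
  Gred l1 l2 u v (1-u-v) = Gmin l1 l2
    + 2*(l1+l2)^2 * (zweight l1 l2 u v - zstar l1 l2)^2 + 4*l2*(l1-l2)*v.
Proof. intro hs. unfold Gred, Gmin, zweight, zstar. field. exact hs. Qed.

Lemma Gred_small_form (l1 l2 u v : R) : l1 + l2 <> 0 ->
  Gred l1 l2 u v (1-u-v) = Gid l1 l2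
    + 2*(l1+l2) * (1 - zweight l1 l2 u v) * (2 - (l1+l2) * zweight l1 l2 u v)
    + 4*l2*(l1-l2)*v.
Proof. intro hs. unfold Gred, Gid, zweight. field. exact hs. Qed.

Lemma zweight_bounds (l1 l2 u v : R) : l1 > l2 -> l2 > 0 -> triangle u v ->
  0 <= zweight l1 l2 u v <= 1.
Proof.
  intros h12 h2 [hu [hv huv]]. unfold zweight.
  assert (0 <= (l1 - l2) * v / (l1 + l2) <= v).
  { split.
    - unfold Rdiv. apply Rmult_le_pos; [apply Rmult_le_pos | left; apply Rinv_0_lt_compat]; lra.
    - apply Rmult_le_reg_r with (l1 + l2); [lra|]. field_simplify; nra. }
  lra.
Qed.

Lemma zweight_axis (l1 l2 u : R) : l1 + l2 <> 0 -> zweight l1 l2 u 0 = u.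
Proof. intro hs. unfold zweight. field. exact hs. Qed.

Lemma zstar_bounds (l1 l2 : R) : 2 <= l1 + l2 -> 0 <= zstar l1 l2 <= 1.
Proof.
  intro hs. unfold zstar. assert (0 < 1 / (l1 + l2) <= 1/2); [|lra].
  split; [apply Rdiv_lt_0_compat; lra|].
  apply Rmult_le_reg_r with (l1 + l2); [lra|]. field_simplify; lra.
Qed.

Lemma square_eq_0 (x : R) : x ^ 2 = 0 -> x = 0.
Proof. intro h. nra. Qed.

Section Extrema.
Variables l1 l2 : R.
Hypothesis h12 : l1 > l2.
Hypothesis h2 : l2 > 0.
Local Notation D := (diag3 l1 l2 l2).

Lemma G_eq_Gmax_iff (p : quat) : onS3 p -> Gfun D p = Gmax l1 l2 <-> q0 p = 0 /\ q1 p = 0.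
Proof.
  intro hp. pose proof (Gred_max_gap l1 l2 _ _ (onS3_triangle p hp)) as gap.
  destruct (onS3_triangle p hp) as [hu [hv _]].
  rewrite G_on_sphere by exact hp. split.
  - intro hG. rewrite hG in gap. split; apply square_eq_0; nra.
  - intros [ha hb]. rewrite ha, hb, <- (Gred_max_value l1 l2). f_equal; ring.
Qed.

Lemma isGlobMaxG_iff_Gmax (q : quat) : isGlobMaxG D q <-> onS3 q /\ Gfun D q = Gmax l1 l2.
Proof.
  apply isGlobMaxG_iff_value.
  - intros p hp. pose proof (Gred_max_gap l1 l2 _ _ (onS3_triangle p hp)) as gap.
    destruct (onS3_triangle p hp) as [hu [hv _]].
    rewrite G_on_sphere by exact hp. nra.
  - assert (hp : onS3 (mkQ 0 0 1 0)) by (unfold onS3; cbn; lra).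
    exists (mkQ 0 0 1 0). split; [exact hp|]. apply G_eq_Gmax_iff; [exact hp|]. cbn; lra.
Qed.

Section LargeTrace.
Hypothesis hs : l1 + l2 > 2.

Lemma G_min_gap_large (p : quat) : onS3 p ->
  Gfun D p = Gmin l1 l2
    + 2 * (l1 + l2) ^ 2 * (zweight l1 l2 (q0 p ^ 2) (q1 p ^ 2) - zstar l1 l2) ^ 2
    + 4 * l2 * (l1 - l2) * q1 p ^ 2.
Proof. intro hp. rewrite G_on_sphere, Gred_min_form by (assumption || lra). reflexivity. Qed.

Lemma G_ge_Gmin (p : quat) : onS3 p -> Gmin l1 l2 <= Gfun D p.
Proof.
  intro hp. rewrite G_min_gap_large by exact hp.
  assert (0 <= 4 * l2 * (l1 - l2) * q1 p ^ 2)
    by (apply Rmult_le_pos; [nra | apply pow2_ge_0]).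
  assert (0 <= 2 * (l1 + l2) ^ 2 * (zweight l1 l2 (q0 p ^ 2) (q1 p ^ 2) - zstar l1 l2) ^ 2)
    by (apply Rmult_le_pos; [nra | apply pow2_ge_0]).
  lra.
Qed.

Lemma G_eq_Gmin_iff (p : quat) : onS3 p ->
  Gfun D p = Gmin l1 l2 <-> q1 p = 0 /\ q0 p ^ 2 = zstar l1 l2.
Proof.
  intro hp. rewrite G_min_gap_large by exact hp. split.
  - intro hG.
    assert (hk : 0 < 4 * l2 * (l1 - l2)) by nra.
    assert (hc : 0 < 2 * (l1 + l2) ^ 2) by nra.
    pose proof (pow2_ge_0 (q1 p)).
    pose proof (pow2_ge_0 (zweight l1 l2 (q0 p ^ 2) (q1 p ^ 2) - zstar l1 l2)).
    assert (hb : q1 p = 0).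
    { apply square_eq_0. apply Rmult_eq_reg_l with (4 * l2 * (l1 - l2)); nra. }
    split; [exact hb|].
    rewrite hb, pow_i, zweight_axis in hG by (lia || lra).
    assert (hsq : (q0 p ^ 2 - zstar l1 l2) ^ 2 = 0)
      by (apply Rmult_eq_reg_l with (2 * (l1 + l2) ^ 2); nra).
    apply square_eq_0 in hsq. lra.
  - intros [hb ha]. rewrite hb, pow_i, zweight_axis, ha by (lia || lra). ring.
Qed.

Lemma isGlobMinG_iff_Gmin (q : quat) : isGlobMinG D q <-> onS3 q /\ Gfun D q = Gmin l1 l2.
Proof.
  apply isGlobMinG_iff_value; [exact G_ge_Gmin|].
  pose proof (zstar_bounds l1 l2 ltac:(lra)).
  set (p := mkQ (sqrt (zstar l1 l2)) 0 (sqrt (1 - zstar l1 l2)) 0).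
  assert (hp : onS3 p) by (unfold onS3, p; cbn [q0 q1 q2 q3]; rewrite !pow2_sqrt; lra).
  exists p. split; [exact hp|]. apply G_eq_Gmin_iff; [exact hp|].
  unfold p; cbn [q0 q1]. rewrite pow2_sqrt by lra. split; reflexivity.
Qed.

End LargeTrace.

Section SmallTrace.
Hypothesis hs : l1 + l2 <= 2.

Lemma G_min_gap_small (p : quat) : onS3 p ->
  Gfun D p = Gid l1 l2
    + 2 * (l1 + l2) * (1 - zweight l1 l2 (q0 p ^ 2) (q1 p ^ 2))
        * (2 - (l1 + l2) * zweight l1 l2 (q0 p ^ 2) (q1 p ^ 2))
    + 4 * l2 * (l1 - l2) * q1 p ^ 2.
Proof. intro hp. rewrite G_on_sphere, Gred_small_form by (assumption || lra). reflexivity. Qed.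

Lemma G_min_gap_small_nonneg (p : quat) : onS3 p ->
  0 <= 2 * (l1 + l2) * (1 - zweight l1 l2 (q0 p ^ 2) (q1 p ^ 2))
         * (2 - (l1 + l2) * zweight l1 l2 (q0 p ^ 2) (q1 p ^ 2)).
Proof.
  intro hp. pose proof (zweight_bounds l1 l2 _ _ h12 h2 (onS3_triangle p hp)).
  apply Rmult_le_pos; [apply Rmult_le_pos|]; nra.
Qed.

Lemma G_ge_Gid (p : quat) : onS3 p -> Gid l1 l2 <= Gfun D p.
Proof.
  intro hp. rewrite G_min_gap_small by exact hp.
  pose proof (G_min_gap_small_nonneg p hp).
  assert (0 <= 4 * l2 * (l1 - l2) * q1 p ^ 2)
    by (apply Rmult_le_pos; [nra | apply pow2_ge_0]).
  lra.
Qed.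

Lemma G_eq_Gid_iff (p : quat) : onS3 p -> Gfun D p = Gid l1 l2 <-> q0 p ^ 2 = 1.
Proof.
  intro hp. pose proof (G_min_gap_small_nonneg p hp).
  destruct (onS3_triangle p hp) as [hu [hv huv]].
  rewrite G_min_gap_small by exact hp. split.
  - intro hG.
    assert (hk : 0 < 4 * l2 * (l1 - l2)) by nra.
    assert (hb : q1 p = 0).
    { apply square_eq_0. apply Rmult_eq_reg_l with (4 * l2 * (l1 - l2)); nra. }
    rewrite hb, pow_i, zweight_axis in hG by (lia || lra).
    assert (e : (1 - q0 p ^ 2) * (2 - (l1 + l2) * q0 p ^ 2) = 0).
    { apply Rmult_eq_reg_l with (2 * (l1 + l2)); [|lra]. nra. }
    (* the second factor vanishes only if l1 + l2 = 2 and q0^2 = 1 *)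
    destruct (Rmult_integral _ _ e); nra.
  - intro ha.
    assert (hb : q1 p = 0) by (apply square_eq_0; lra).
    rewrite hb, pow_i, zweight_axis, ha by (lia || lra). ring.
Qed.

Lemma isGlobMinG_iff_Gid (q : quat) : isGlobMinG D q <-> onS3 q /\ Gfun D q = Gid l1 l2.
Proof.
  apply isGlobMinG_iff_value; [exact G_ge_Gid|].
  assert (hp : onS3 (mkQ 1 0 0 0)) by (unfold onS3; cbn; lra).
  exists (mkQ 1 0 0 0). split; [exact hp|]. apply G_eq_Gid_iff; [exact hp|]. cbn; ring.
Qed.

End SmallTrace.

End Extrema.

Lemma polar_coordinates (c d r : R) : 0 < r -> c^2 + d^2 = r^2 ->
  exists al, 0 <= al < 2 * PI /\ c = r * cos al /\ d = r * sin al.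
Proof.
  intros hr h.
  set (x := c / r).
  assert (hx : -1 <= x <= 1).
  { unfold x. assert (c^2 <= r^2) by nra.
    split; apply (Rmult_le_reg_r r); try lra; field_simplify; nra. }
  assert (hc : c = r * cos (acos x)) by (rewrite cos_acos by lra; unfold x; field; lra).
  assert (hs : sin (acos x) = Rabs d / r).
  { rewrite sin_acos by lra.
    assert (E : 1 - x² = (Rabs d / r) ^ 2).
    { pose proof (Rsqr_abs d) as ha. unfold x, Rsqr in *.
      assert (H' : Rabs d * Rabs d = r * r - c * c) by nra.
      replace ((Rabs d / r) ^ 2) with (Rabs d * Rabs d / (r * r)) by (field; lra).
      rewrite H'. field. lra. }
    rewrite E, sqrt_pow2; [reflexivity|].
    unfold Rdiv. apply Rmult_le_pos; [apply Rabs_pos | left; apply Rinv_0_lt_compat; lra]. }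
  pose proof (acos_bound x). pose proof PI_RGT_0.
  destruct (Rle_dec 0 d) as [hd|hd].
  - exists (acos x). split; [lra|]. split; [exact hc|].
    rewrite hs, Rabs_right by lra. field; lra.
  - assert (hb2 : acos x <> 0).
    { intro e. rewrite e, sin_0 in hs. assert (Rabs d > 0) by (apply Rabs_pos_lt; lra).
      assert (Rabs d / r > 0) by (apply Rdiv_lt_0_compat; lra). lra. }
    exists (2 * PI - acos x). split; [lra|]. split.
    + rewrite cos_minus, cos_2PI, sin_2PI, hc at 1. ring.
    + rewrite sin_minus, cos_2PI, sin_2PI, hs, Rabs_left by lra. field. lra.
Qed.

Lemma sign_square (e : R) : isSign e -> e ^ 2 = 1.
Proof. intros [-> | ->]; ring. Qed.

Lemma latitude_circle (a b : R) (q : quat) : 0 <= a -> 0 < b -> a ^ 2 + b ^ 2 = 1 ->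
  (onS3 q /\ q1 q = 0 /\ q0 q ^ 2 = a ^ 2) <->
  exists e al, isSign e /\ 0 <= al < 2 * PI /\ q = mkQ (e * a) 0 (b * cos al) (b * sin al).
Proof.
  intros ha hb hab. destruct q as [x y z w]. unfold onS3; cbn [q0 q1 q2 q3]. split.
  - intros [hq [hy hx]]. subst y.
    destruct (polar_coordinates z w b hb ltac:(lra)) as [al [hal [hz hw]]].
    assert (hsx : (x - a) * (x + a) = 0) by nra.
    destruct (Rmult_integral _ _ hsx); [exists 1 | exists (-1)]; exists al;
      (split; [unfold isSign; lra | split; [exact hal | f_equal; lra]]).
  - intros [e [al [he [hal heq]]]]. injection heq as -> -> -> ->.
    pose proof (sign_square e he). pose proof (sin2_cos2 al) as hsc. unfold Rsqr in hsc.
    split; [nra | split; [reflexivity | nra]].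
Qed.

Lemma Pmat_axis_circle (al : R) : mat_eq (Pmat (mkQ 0 0 (cos al) (sin al))) (RmaxAlpha al).
Proof.
  pose proof (sin2_cos2 al) as h. unfold Rsqr in h.
  entrywise; cbv beta iota zeta delta [Pmat RmaxAlpha q0 q1 q2 q3];
    rewrite ?cos_2a, ?sin_2a; lra.
Qed.

Lemma RmaxAlpha_0 : mat_eq (diag3 (-1) 1 (-1)) (RmaxAlpha 0).
Proof.
  entrywise; cbv beta iota zeta delta [diag3 RmaxAlpha];
    rewrite ?Rmult_0_r, ?cos_0, ?sin_0; ring.
Qed.

Lemma RmaxAlpha_PI2 : mat_eq (diag3 (-1) (-1) 1) (RmaxAlpha (PI / 2)).
Proof.
  entrywise; cbv beta iota zeta delta [diag3 RmaxAlpha];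
    replace (2 * (PI / 2)) with PI by field; rewrite ?cos_PI, ?sin_PI; ring.
Qed.

Lemma Pmat_identity (a : R) : a ^ 2 = 1 -> mat_eq (Pmat (mkQ a 0 0 0)) Id3.
Proof. intro h. entrywise; cbv beta iota zeta delta [Pmat Id3 Nat.eqb q0 q1 q2 q3]; lra. Qed.

Section MainParts.
Variables l1 l2 : R.
Hypothesis h12 : l1 > l2.
Hypothesis h2 : l2 > 0.
Local Notation D := (diag3 l1 l2 l2).

Lemma max_quaternions (q : quat) :
  isGlobMaxG D q <-> exists al, 0 <= al < 2 * PI /\ q = mkQ 0 0 (cos al) (sin al).
Proof.
  assert (circle := latitude_circle 0 1 q ltac:(lra) ltac:(lra) ltac:(lra)).
  rewrite isGlobMaxG_iff_Gmax by assumption. split.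
  - intros [hq hG]. apply G_eq_Gmax_iff in hG; [|assumption..].
    destruct hG as [ha hb].
    destruct (proj1 circle) as [e [al [_ [hal ->]]]]; [rewrite ha; repeat split; auto; ring|].
    exists al. split; [exact hal|]. f_equal; ring.
  - intros [al [hal ->]].
    destruct (proj2 circle) as [hq _].
    { exists 1, al. split; [left; reflexivity | split; [exact hal | f_equal; ring]]. }
    split; [exact hq|]. apply G_eq_Gmax_iff; [assumption.. | split; reflexivity].
Qed.

Lemma part_i :
  (forall q : quat, isGlobMaxG D q <->
      (q = mkQ 0 0 1 0 \/ q = mkQ 0 0 (-1) 0 \/ q = mkQ 0 0 0 1 \/ q = mkQ 0 0 0 (-1) \/
       exists al, 0 <= al < 2 * PI /\ q = mkQ 0 0 (cos al) (sin al))) /\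
  (forall Q : Mat3, isGlobMaxW D Q <->
      (mat_eq Q (diag3 (-1) 1 (-1)) \/ mat_eq Q (diag3 (-1) (-1) 1) \/
       exists al, 0 <= al < 2 * PI /\ mat_eq Q (RmaxAlpha al))).
Proof.
  pose proof PI_RGT_0. split.
  - intro q. rewrite max_quaternions. split.
    + intro h. do 4 right. exact h.
    + intros [->|[->|[->|[->|h]]]]; [| | | | exact h].
      * exists 0. rewrite cos_0, sin_0. split; [lra | reflexivity].
      * exists PI. rewrite cos_PI, sin_PI. split; [lra | reflexivity].
      * exists (PI / 2). rewrite cos_PI2, sin_PI2. split; [lra | reflexivity].
      * exists (3 * (PI / 2)). rewrite cos_3PI2, sin_3PI2. split; [lra | reflexivity].
  - intro Q. rewrite isGlobMaxW_iff.
    assert (hcirc : (exists q, isGlobMaxG D q /\ mat_eq Q (Pmat q)) <->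
                    exists al, 0 <= al < 2 * PI /\ mat_eq Q (RmaxAlpha al)).
    { split.
      - intros [q [hq hE]]. apply max_quaternions in hq. destruct hq as [al [hal ->]].
        exists al. split; [exact hal | exact (mat_eq_trans _ _ _ hE (Pmat_axis_circle al))].
      - intros [al [hal hE]]. exists (mkQ 0 0 (cos al) (sin al)). split.
        + apply max_quaternions. exists al. split; [exact hal | reflexivity].
        + exact (mat_eq_trans _ _ _ hE (mat_eq_sym _ _ (Pmat_axis_circle al))). }
    rewrite hcirc. split.
    + intro h. right; right; exact h.
    + intros [h|[h|h]]; [exists 0 | exists (PI / 2) | exact h]; split; try lra.
      * exact (mat_eq_trans _ _ _ h RmaxAlpha_0).
      * exact (mat_eq_trans _ _ _ h RmaxAlpha_PI2).
Qed.

Lemma part_ii : l1 + l2 > 2 ->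
   let s := l1 + l2 in
   let a := sqrt (1/2 + 1/s) in
   let b := sqrt (1/2 - 1/s) in
   let m := (l2 - 1) ^ 2 + 1/2 * (l1 - l2) ^ 2 in
   (forall q : quat, isGlobMinG D q <->
      ((exists e1 e2, isSign e1 /\ isSign e2 /\
          (q = mkQ (e1 * a) 0 0 (e2 * b) \/ q = mkQ (e1 * a) 0 (e2 * b) 0)) \/
       (exists e1 al, isSign e1 /\ 0 <= al < 2 * PI /\
          q = mkQ (e1 * a) 0 (b * cos al) (b * sin al)))) /\
   (forall q : quat, isGlobMinG D q -> Gfun D q = m) /\
   (forall Q : Mat3, isGlobMinW D Q <->
      exists q, isGlobMinG D q /\ mat_eq Q (Pmat q)) /\
   (forall Q : Mat3, isGlobMinW D Q -> W10 Q D = m).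
Proof.
  intros hs s a b m.
  pose proof (zstar_bounds l1 l2 ltac:(lra)) as hz.
  unfold zstar in hz.
  assert (ha2 : a ^ 2 = zstar l1 l2) by (unfold a, s, zstar; apply pow2_sqrt; lra).
  assert (hb2 : b ^ 2 = 1 - zstar l1 l2)
    by (unfold b, s, zstar; rewrite pow2_sqrt by lra; lra).
  assert (hb : 0 < b).
  { apply sqrt_lt_R0. enough (1 / s < 1 / 2) by lra.
    apply Rmult_lt_reg_r with s; unfold s; [lra|]. field_simplify; lra. }
  assert (circle := fun q => latitude_circle a b q (sqrt_pos _) hb ltac:(lra)).
  assert (hmin : forall q, isGlobMinG D q <-> onS3 q /\ q1 q = 0 /\ q0 q ^ 2 = a ^ 2).
  { intro q. rewrite isGlobMinG_iff_Gmin, ha2 by assumption. split.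
    - intros [hq hG]. split; [exact hq|]. apply G_eq_Gmin_iff; assumption.
    - intros [hq hc]. split; [exact hq|]. apply G_eq_Gmin_iff; assumption. }
  assert (hval : forall q, isGlobMinG D q -> Gfun D q = m)
    by (intros q hq; apply isGlobMinG_iff_Gmin in hq; [exact (proj2 hq) | assumption..]).
  split; [|split; [exact hval | split; [exact (isGlobMinW_iff D) |]]].
  - intro q. rewrite hmin. split.
    + intro h. right. apply circle, h.
    + intros [[e1 [e2 [he1 [he2 [-> | ->]]]]] | h]; [| | apply circle, h];
        pose proof (sign_square e1 he1); pose proof (sign_square e2 he2);
        unfold onS3; cbn [q0 q1 q2 q3]; repeat split; nra.
  - intros Q hQ. apply isGlobMinW_iff in hQ. destruct hQ as [q [hq hE]].
    rewrite (W10_mat_eq _ _ D hE). apply hval, hq.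
Qed.

Lemma part_iii : l1 + l2 <= 2 ->
   (forall q : quat, isGlobMinG D q <-> (q = mkQ 1 0 0 0 \/ q = mkQ (-1) 0 0 0)) /\
   (forall Q : Mat3, isGlobMinW D Q <-> mat_eq Q Id3).
Proof.
  intro hs.
  assert (hmin : forall q, isGlobMinG D q <-> (q = mkQ 1 0 0 0 \/ q = mkQ (-1) 0 0 0)).
  { intro q. rewrite isGlobMinG_iff_Gid by assumption.
    destruct q as [x y z w]. split.
    - intros [hq hG]. apply G_eq_Gid_iff in hG; [|assumption..].
      unfold onS3 in hq; cbn [q0 q1 q2 q3] in hq, hG.
      assert (y = 0 /\ z = 0 /\ w = 0) as (-> & -> & ->) by (repeat split; nra).
      assert (hx : (x - 1) * (x + 1) = 0) by nra.
      destruct (Rmult_integral _ _ hx); [left | right]; f_equal; lra.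
    - intro h.
      assert (hx : x ^ 2 = 1 /\ y = 0 /\ z = 0 /\ w = 0)
        by (destruct h as [e | e]; injection e as -> -> -> ->; repeat split; ring).
      destruct hx as (hx & -> & -> & ->).
      assert (hq : onS3 (mkQ x 0 0 0)) by (unfold onS3; cbn; lra).
      split; [exact hq|]. apply G_eq_Gid_iff; [assumption.. | exact hx]. }
  split; [exact hmin|].
  intro Q. rewrite isGlobMinW_iff. split.
  - intros [q [hq hE]]. apply hmin in hq.
    destruct hq as [-> | ->]; apply (mat_eq_trans _ _ _ hE), Pmat_identity; ring.
  - intro hE. exists (mkQ 1 0 0 0). split; [apply hmin; left; reflexivity|].
    apply (mat_eq_trans _ _ _ hE), mat_eq_sym, Pmat_identity. ring.
Qed.

End MainParts.

Theorem mainTheorem11 (l1 l2 : R) (h12 : l1 > l2) (h2 : l2 > 0) :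
  let D := diag3 l1 l2 l2 in
  (* (i) *)
  ((forall q : quat, isGlobMaxG D q <->
      (q = mkQ 0 0 1 0 \/ q = mkQ 0 0 (-1) 0 \/ q = mkQ 0 0 0 1 \/ q = mkQ 0 0 0 (-1) \/
       exists al, 0 <= al < 2 * PI /\ q = mkQ 0 0 (cos al) (sin al))) /\
   (forall Q : Mat3, isGlobMaxW D Q <->
      (mat_eq Q (diag3 (-1) 1 (-1)) \/ mat_eq Q (diag3 (-1) (-1) 1) \/
       exists al, 0 <= al < 2 * PI /\ mat_eq Q (RmaxAlpha al)))) /\
  (* (ii) *)
  (l1 + l2 > 2 ->
   let s := l1 + l2 in
   let a := sqrt (1/2 + 1/s) in
   let b := sqrt (1/2 - 1/s) in
   let m := (l2 - 1) ^ 2 + 1/2 * (l1 - l2) ^ 2 in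
   (forall q : quat, isGlobMinG D q <->
      ((exists e1 e2, isSign e1 /\ isSign e2 /\
          (q = mkQ (e1 * a) 0 0 (e2 * b) \/ q = mkQ (e1 * a) 0 (e2 * b) 0)) \/
       (exists e1 al, isSign e1 /\ 0 <= al < 2 * PI /\
          q = mkQ (e1 * a) 0 (b * cos al) (b * sin al)))) /\
   (forall q : quat, isGlobMinG D q -> Gfun D q = m) /\
   (forall Q : Mat3, isGlobMinW D Q <->
      exists q, isGlobMinG D q /\ mat_eq Q (Pmat q)) /\
   (forall Q : Mat3, isGlobMinW D Q -> W10 Q D = m)) /\
  (* (iii) *)
  (l1 + l2 <= 2 ->
   (forall q : quat, isGlobMinG D q <-> (q = mkQ 1 0 0 0 \/ q = mkQ (-1) 0 0 0)) /\
   (forall Q : Mat3, isGlobMinW D Q <-> mat_eq Q Id3)).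
Proof.
  intro D. split; [|split].
  - exact (part_i l1 l2 h12 h2).
  - exact (part_ii l1 l2 h12 h2).
  - exact (part_iii l1 l2 h12 h2).
Qed.
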